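(* Let $\mathcal S$ be a $2$-$(v,k,\lambda)$ design admitting a flag-transitive automorphism group $\Gamma$, with $v=k+1$ or $v=k+2$. Then one of the following holds: (1) $\mathcal S$ is the complete $2$-$(v,k,\lambda)$ design and $\Gamma$ acts $2$-transitively on points; (2) $k$ is odd and $\Gamma$ is a point-primitive group of rank $3$ with subdegrees $1,\frac{k+1}{2},\frac{k+1}{2}$.
   Context: A complete $2$-$(v,k,\lambda)$ design has all $k$-subsets as blocks. *)

From mathcomp Require Import all_boot all_fingroup all_solvable.
Set Implicit Arguments. Unset Strict Implicit. Unset Printing Implicit Defensive.
Local Open Scope group_scope.

Definition is_2design (T : finType) (B : {set {set T}}) (v k lam : nat) : Prop :=
  [/\ #|T| = v, (2 <= k)%N, (0 < lam)%N,
      forall b, b \in B -> #|b| = k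
    & forall x y : T, x != y -> #|[set b in B | (x \in b) && (y \in b)]| = lam].

Definition is_autgroup (T : finType) (B : {set {set T}}) (G : {group {perm T}}) : Prop :=
  forall g, g \in G -> forall b, b \in B -> (g @: b) \in B.

Definition flag_transitive (T : finType) (B : {set {set T}}) (G : {group {perm T}}) : Prop :=
  forall x y (b c : {set T}), b \in B -> x \in b -> c \in B -> y \in c ->
    exists2 g, g \in G & g x = y /\ g @: b = c.

Definition complete_design (T : finType) (B : {set {set T}}) (k : nat) : Prop :=
  B = [set b : {set T} | #|b| == k].

Definition stab_orbits (T : finType) (G : {group {perm T}}) (x : T) : {set {set T}} :=
  orbit 'P 'C_G[x | 'P] @: [set: T].

Definition rank3_subdegrees (T : finType) (G : {group {perm T}}) (d : nat) : Prop :=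
  [transitive G, on [set: T] | 'P] /\
  forall x : T, #|stab_orbits G x| = 3 /\
    forall O, O \in stab_orbits G x -> O != [set x] -> #|O| = d.

From mathcomp Require Import all_boot all_fingroup all_solvable.
From mathcomp Require Import zify.

Set Implicit Arguments.
Unset Strict Implicit.
Unset Printing Implicit Defensive.
Local Open Scope group_scope.

(* Point-transitivity makes the number r of blocks through a point constant, so
   by inclusion-exclusion the number of blocks missing a set U of at most two
   points is |B| - |U| r + C(|U|, 2) lam, a function of |U| alone.  A block
   missing a set S of size v - k must be the complement of S; as a block misses
   its own complement, every (v - k)-set is missed by some block when v - k <= 2,
   i.e. every k-set is a block.  In the complete design, flag-transitivity makes
   each point stabiliser transitive on the (v - k)-sets avoiding the point, hence
   on the other points, and G is 2-transitive.  Blocks form a set, so the design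
   is simple and the rank 3 alternative never occurs. *)

Section Designs.

Variables (T : finType) (B : {set {set T}}).

Definition blocks_through (x : T) : {set {set T}} := [set b in B | x \in b].

Definition blocks_avoiding (S : {set T}) : {set {set T}} :=
  [set b in B | b \subset ~: S].

Lemma card_blocks_avoiding1 x :
  #|blocks_avoiding [set x]| + #|blocks_through x| = #|B|.
Proof.
rewrite -(cardsID [set b : {set T} | x \in b] B) addnC.
congr (_ + _); apply: eq_card => b.
  by rewrite !inE andbC.
rewrite !inE andbC; congr (_ && _).
by rewrite -disjoints_subset disjoint_sym disjoints1.
Qed.

Lemma card_blocks_avoiding2 x y :
  #|blocks_avoiding [set x; y]| + #|blocks_through x| + #|blocks_through y|
  = #|B| + #|blocks_through x :&: blocks_through y|.
Proof.
set tx := blocks_through x; set ty := blocks_through y.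
have txyB : tx :|: ty \subset B.
  by apply/subsetP => b; rewrite !inE => /orP[] /andP[].
have -> : blocks_avoiding [set x; y] = B :\: (tx :|: ty).
  apply/setP => b; rewrite !inE setCU subsetI -!disjoints_subset.
  rewrite ![[disjoint b & _]]disjoint_sym !disjoints1.
  by case: (b \in B) (x \in b) (y \in b) => [] [] [].
rewrite -addnA -cardsUI -(cardsID (tx :|: ty) B) (setIidPr txyB).
by rewrite addnA [_ + #|tx :|: ty|]addnC.
Qed.

Lemma blocks_throughI x y :
  blocks_through x :&: blocks_through y = [set b in B | (x \in b) && (y \in b)].
Proof. by apply/setP => b; rewrite !inE andbACA andbb. Qed.

Lemma card_blocks_avoiding r lam (U : {set T}) :
  (forall x, #|blocks_through x| = r) ->
  (forall x y, x != y -> #|blocks_through x :&: blocks_through y| = lam) ->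
  #|U| <= 2 -> #|blocks_avoiding U| + #|U| * r = #|B| + 'C(#|U|, 2) * lam.
Proof.
move=> rx lamxy; rewrite leq_eqVlt ltnS leq_eqVlt ltnS leqn0.
case/or3P => [/cards2P[x [y [xy ->]]] | /cards1P[x ->] | /eqP/cards0_eq ->].
- have := card_blocks_avoiding2 x y; rewrite cards2 xy /= binn lamxy // !rx; lia.
- by rewrite cards1 bin_small // mul0n addn0 mul1n -(rx x) card_blocks_avoiding1.
- rewrite cards0 bin_small // !mul0n !addn0.
  by apply: eq_card => b; rewrite inE setC0 subsetT andbT.
Qed.

Lemma blocks_avoidingE k (S b : {set T}) :
  (forall c, c \in B -> #|c| = k) -> #|S| + k = #|T| ->
  b \in blocks_avoiding S -> b = ~: S.
Proof.
move=> Bk cardS; rewrite inE => /andP[Bb bS].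
apply/eqP; rewrite eqEcard bS (Bk _ Bb).
by have := cardsC S; lia.
Qed.

Lemma complete_design_of_blocks_avoiding k :
  (forall b : {set T}, b \in B -> #|b| = k) ->
  (forall S : {set T}, #|S| + k = #|T| -> 0 < #|blocks_avoiding S|) ->
  complete_design B k.
Proof.
move=> Bk avoidS; apply/setP => b; rewrite inE.
apply/idP/eqP => [/Bk // | bk].
have cardCb : #|~: b| + k = #|T| by rewrite -bk addnC cardsC.
have /card_gt0P[c cS] := avoidS _ cardCb.
by rewrite -[b]setCK -(blocks_avoidingE Bk cardCb cS); case/setIdP: cS.
Qed.

End Designs.

Lemma imset_permC (T : finType) (g : {perm T}) (A : {set T}) :
  g @: (~: A) = ~: (g @: A).
Proof.
apply/setP => y; rewrite -[y](permKV g) inE.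
by rewrite !(mem_imset _ _ (@perm_inj _ g)) inE.
Qed.

Lemma moves_of_pair_moves (T : finType) (H : {group {perm T}}) (X : {set T}) :
  2 < #|X| ->
  (forall P Q : {set T}, P \subset X -> Q \subset X -> #|P| = 2 -> #|Q| = 2 ->
     exists2 h, h \in H & h @: P = Q) ->
  {in X &, forall w y, exists2 h, h \in H & h w = y}.
Proof.
move=> X_gt2 pairs w y Xw Xy.
have [<- | wy] := eqVneq w y; first by exists 1; rewrite ?group1 ?perm1.
have /subsetPn[z Xz] : ~~ (X \subset [set w; y]).
  by apply/negP => /subset_leq_card; rewrite cards2 wy; lia.
rewrite !inE negb_or => /andP[zw zy].
have sub2 u : u \in X -> [set u; z] \subset X.
  by move=> Xu; apply/subsetP => t /set2P[] ->.
have card2 u : z != u -> #|[set u; z]| = 2 by rewrite cards2 eq_sym => ->.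
have [h Hh hwz] := pairs _ _ (sub2 w Xw) (sub2 y Xy) (card2 w zw) (card2 y zy).
have to_yz u : u \in [set w; z] -> h u \in [set y; z].
  by move=> u_wz; rewrite -hwz imset_f.
case/set2P: (to_yz w (set21 w z)) => hw; first by exists h.
case/set2P: (to_yz z (set22 w z)) => hz.
  by exists (h * h); rewrite ?groupM // !permM hw hz.
by move: zw; rewrite -(inj_eq (@perm_inj _ h)) hw hz eqxx.
Qed.

Section Transitivity.

Variables (aT : finGroupType) (sT : finType) (to : {action aT &-> sT}).
Variables (A : {group aT}) (S : {set sT}).

Lemma atrans_of_moves x :
  [acts A, on S | to] -> x \in S ->
  {in S, forall y, exists2 a, a \in A & to x a = y} ->
  [transitive A, on S | to].
Proof.
move=> actsA Sx moves; apply/imsetP; exists x => //; apply/eqP.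
rewrite eqEsubset acts_sub_orbit // Sx andbT; apply/subsetP => y.
by case/moves=> a Aa <-; apply: mem_orbit.
Qed.

Lemma ntransitive1_atrans :
  [transitive A, on S | to] -> [transitive^1 A, on S | to].
Proof.
move=> trA; have [x Sx _] := imsetP trA.
exact: stab_ntransitiveI Sx trA (ntransitive0 _ _ _).
Qed.

End Transitivity.

Section AutomorphismGroup.

Variables (T : finType) (B : {set {set T}}) (G : {group {perm T}}).
Hypothesis autG : is_autgroup B G.

Lemma card_blocks_through_le g x :
  g \in G -> #|blocks_through B x| <= #|blocks_through B (g x)|.
Proof.
move=> Gg; rewrite -(card_imset _ (imset_inj (@perm_inj _ g))).
apply/subset_leq_card/subsetP => c /imsetP[b]; rewrite !inE => /andP[Bb xb] ->.
by rewrite autG //= (mem_imset _ _ (@perm_inj _ g)).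
Qed.

Lemma card_blocks_through_perm g x :
  g \in G -> #|blocks_through B (g x)| = #|blocks_through B x|.
Proof.
move=> Gg; apply/eqP; rewrite eqn_leq card_blocks_through_le // andbT.
by rewrite -{2}(permK g x); apply: card_blocks_through_le; rewrite groupV.
Qed.

End AutomorphismGroup.

Lemma flag_transitive_moves (T : finType) (B : {set {set T}}) (G : {group {perm T}}) :
  flag_transitive B G -> (forall x, exists2 b, b \in B & x \in b) ->
  forall x y, exists2 g, g \in G & g x = y.
Proof.
move=> flagG on_block x y.
have [b Bb xb] := on_block x; have [c Bc yc] := on_block y.
by have [g Gg [gx _]] := flagG x y b c Bb xb Bc yc; exists g.
Qed.

Lemma complete_flag_transitive_stab (T : finType) (B : {set {set T}})
    (G : {group {perm T}}) k x (S S' : {set T}) :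
  complete_design B k -> flag_transitive B G ->
  #|S| + k = #|T| -> #|S'| + k = #|T| -> x \notin S -> x \notin S' ->
  exists2 g, g \in 'C_G[x | 'P] & g @: S = S'.
Proof.
move=> completeB flagG cardS cardS' xS xS'.
have blockC (U : {set T}) : #|U| + k = #|T| -> ~: U \in B.
  by move=> cardU; rewrite completeB inE; apply/eqP; have := cardsC U; lia.
have [xCS xCS'] : x \in ~: S /\ x \in ~: S' by rewrite !inE.
have [g Gg [gx gS]] := flagG x x _ _ (blockC _ cardS) xCS (blockC _ cardS') xCS'.
exists g; first by rewrite inE Gg; apply/astab1P.
by apply: (@setC_inj T); rewrite -imset_permC.
Qed.

Lemma complete_flag_transitive_stab_moves (T : finType) (B : {set {set T}})
    (G : {group {perm T}}) k x :
  complete_design B k -> flag_transitive B G -> 2 <= k -> k < #|T| <= k.+2 ->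
  {in [set~ x] &, forall w y, exists2 h, h \in 'C_G[x | 'P] & h w = y}.
Proof.
move=> completeB flagG k_ge2 /andP[k_lt_T T_le_k2].
have stab := complete_flag_transitive_stab (x := x) completeB flagG.
have [T_k1 | T_k2] : #|T| = k.+1 \/ #|T| = k.+2 by lia.
- move=> w y; rewrite !inE => wx yx.
  have card1 (u : T) : #|[set u]| + k = #|T| by rewrite cards1 T_k1 add1n.
  have x_notin (u : T) : u != x -> x \notin [set u] by rewrite inE eq_sym.
  have [h Ch hwy] := stab _ _ (card1 w) (card1 y) (x_notin w wx) (x_notin y yx).
  by exists h => //; apply/set1_inj; rewrite -imset_set1.
- apply: moves_of_pair_moves; first by rewrite cardsC1; lia.
  have notin_sub (P : {set T}) : P \subset [set~ x] -> x \notin P.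
    by move=> Px; apply/negP => /(subsetP Px); rewrite !inE eqxx.
  move=> P Q Px Qx cardP cardQ.
  by apply: stab; rewrite ?notin_sub ?cardP ?cardQ // T_k2 addnC.
Qed.

Section FlagTransitiveDesign.

Variables (T : finType) (B : {set {set T}}) (G : {group {perm T}}).
Variables (v k lam : nat).
Hypotheses (design : is_2design B v k lam) (flagG : flag_transitive B G).
Hypothesis v_small : k < v <= k.+2.

Lemma design_block_through x : exists2 b, b \in B & x \in b.
Proof.
case: design => cardT k_ge2 lam_gt0 _ pairs.
have /card_gt0P[y] : 0 < #|[set~ x]| by rewrite cardsC1; lia.
rewrite !inE => yx.
have /card_gt0P[b] : 0 < #|[set b in B | (x \in b) && (y \in b)]|.
  by rewrite (pairs x y) // (eq_sym x).
by rewrite !inE => /andP[Bb /andP[xb _]]; exists b.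
Qed.

Lemma flag_transitive_design_moves x y : exists2 g, g \in G & g x = y.
Proof. exact: flag_transitive_moves flagG design_block_through x y. Qed.

Hypothesis autG : is_autgroup B G.

Lemma flag_transitive_design_complete : complete_design B k.
Proof.
have [cardT _ _ Bk pairs] := design.
have /card_gt0P[x0 _] : 0 < #|T| by lia.
have repl x : #|blocks_through B x| = #|blocks_through B x0|.
  have [g Gg <-] := flag_transitive_design_moves x0 x.
  by rewrite (card_blocks_through_perm autG x0 Gg).
have lam_through x y : x != y ->
    #|blocks_through B x :&: blocks_through B y| = lam.
  by move=> xy; rewrite blocks_throughI pairs.
have [b0 Bb0 _] := design_block_through x0.
apply: (complete_design_of_blocks_avoiding Bk) => S cardS.
have cardCb0 : #|~: b0| = #|S| by have := cardsC b0; rewrite Bk //; lia.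
have S_le2 : #|S| <= 2 by lia.
have -> : #|blocks_avoiding B S| = #|blocks_avoiding B (~: b0)|.
  have := card_blocks_avoiding repl lam_through S_le2.
  have := card_blocks_avoiding repl lam_through (U := ~: b0).
  by rewrite cardCb0 => /(_ S_le2) <-; apply: addIn.
by apply/card_gt0P; exists b0; rewrite inE Bb0 setCK subxx.
Qed.

Lemma flag_transitive_design_2transitive : [transitive^2 G, on [set: T] | 'P].
Proof.
have [cardT k_ge2 _ _ _] := design.
have /card_gt0P[x _] : 0 < #|T| by lia.
have /card_gt0P[y yx] : 0 < #|[set~ x]| by rewrite cardsC1; lia.
have trG : [transitive G, on [set: T] | 'P].
  apply: (atrans_of_moves (x := x)) => // [|z _].
    by apply/actsP => g _ z; rewrite !inE.
  exact: flag_transitive_design_moves.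
apply: stab_ntransitiveI (in_setT x) trG _.
rewrite setTD; apply/ntransitive1_atrans/(atrans_of_moves (x := y)) => //.
  apply/actsP => g /setIP[_ /astab1P gx] z.
  by rewrite !inE -{1}gx /= apermE (inj_eq perm_inj).
move=> z z_ne_x.
have T_small : k < #|T| <= k.+2 by rewrite cardT.
have [h Ch hyz] := complete_flag_transitive_stab_moves (x := x)
  flag_transitive_design_complete flagG k_ge2 T_small yx z_ne_x.
by exists h; [exact: Ch | exact: hyz].
Qed.

End FlagTransitiveDesign.

Theorem lemma5p2 (T : finType) (B : {set {set T}}) (v k lam : nat)
    (G : {group {perm T}}) :
  is_2design B v k lam -> is_autgroup B G -> flag_transitive B G ->
  (v = k.+1 \/ v = k.+2) ->
  (complete_design B k /\ [transitive^2 G, on [set: T] | 'P])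
  \/
  (odd k /\ [primitive G, on [set: T] | 'P] /\ rank3_subdegrees G (k.+1)./2).
Proof.
move=> design autG flagG v_k; left.
have v_small : k < v <= k.+2 by case: v_k => ->; lia.
split; first exact: flag_transitive_design_complete design flagG v_small autG.
exact: flag_transitive_design_2transitive design flagG v_small autG.
Qed.
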